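(* There exists a finite simple graph $G$ on at most $2\times 10^6$ vertices with girth at least $6$ and fractional chromatic number $\chi_f(G)\geq 3.1$.
   Context: The girth is the length of a shortest cycle; $\chi_f$ denotes the fractional chromatic number. *)

From HB Require Import structures.
From mathcomp Require Import all_boot all_order all_algebra.
From mathcomp Require Import reals.
Set Implicit Arguments. Unset Strict Implicit. Unset Printing Implicit Defensive.
Import Order.TTheory GRing.Theory Num.Theory.

Definition simple_graph (T : finType) (e : rel T) : Prop :=
  symmetric e /\ irreflexive e.

Definition has_cycle_of_length (T : finType) (e : rel T) (k : nat) : Prop :=
  exists f : 'I_k -> T, injective f /\ forall i : 'I_k, e (f i) (f (ordS i)).

(* girth(G) >= g : G has no cycle of length < g (girth = +oo if acyclic). *)
Definition girth_ge (T : finType) (e : rel T) (g : nat) : Prop :=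
  forall k, 3 <= k < g -> ~ has_cycle_of_length e k.

Definition independent (T : finType) (e : rel T) (S : {set T}) : bool :=
  [forall x in S, forall y in S, ~~ e x y].

Local Open Scope ring_scope.

Definition fractional_colouring (R : realType) (T : finType) (e : rel T)
    (w : {set T} -> R) : Prop :=
  (forall S, 0 <= w S) /\
  (forall v : T, 1 <= \sum_(S : {set T} | independent e S && (v \in S)) w S).

Definition fc_weight (R : realType) (T : finType) (e : rel T)
    (w : {set T} -> R) : R :=
  \sum_(S : {set T} | independent e S) w S.

(* chi_f(G) >= c : c is a lower bound of the weights of all fractional
   colourings, i.e. the infimum defining chi_f(G) is >= c. *)
Definition frac_chrom_ge (R : realType) (T : finType) (e : rel T) (c : R) : Prop :=
  forall w : {set T} -> R, fractional_colouring e w -> c <= fc_weight e w.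

(* Take the random graph G(N, p) with N = 2 * 10^6 and p = 81 * 10^-7.  The
   expected number of independent sets of size k = 565001 is at most
   (e N / k * exp (- p (k - 1) / 2))^k, which is negligible, and the expected
   number of cycles of length 3, 4 and 5 is at most the sum of (N p)^l / l, below
   0.975 (m + 1) for m = 248000.  So some outcome has no independent k-set and at
   most m short cycles; deleting one vertex from each short cycle leaves a graph
   of girth at least 6 on at least N - m vertices whose independent sets have
   fewer than k vertices, hence chi_f >= (N - m) / (k - 1) > 3.1. *)

From HB Require Import structures.
From mathcomp Require Import all_boot all_order all_algebra.
From mathcomp Require Import reals sequences exp.
From mathcomp Require Import ring lra.
Set Implicit Arguments. Unset Strict Implicit. Unset Printing Implicit Defensive.
Import Order.TTheory GRing.Theory Num.Theory.

Section CyclicShift.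
Variable l : nat.
Implicit Types i r : 'I_l.+1.

Lemma val_iter_ordS n i : val (iter n (@ordS l.+1) i) = (i + n) %% l.+1.
Proof.
elim: n => [|n IHn] /=; first by rewrite addn0 modn_small.
by rewrite IHn -[((i + n) %% l.+1).+1]addn1 modnDml addn1 addnS.
Qed.

Lemma iter_ordS_neq n i : 0 < n < l.+1 -> iter n (@ordS l.+1) i != i.
Proof.
move=> /andP[n_gt0 n_lt]; apply/eqP => /(congr1 val) /eqP.
rewrite val_iter_ordS -[X in _ == X](modn_small (ltn_ord i)).
by rewrite -[X in _ == X %% _]addn0 eqn_modDl mod0n modn_small // gtn_eqF.
Qed.

Lemma ordS_addr i r : ordS (i + r)%R = (ordS i + r)%R.
Proof.
apply: val_inj => /=.
by rewrite -[((i + r) %% l.+1).+1]addn1 -[i.+1]addn1 !modnDml addnAC.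
Qed.

End CyclicShift.

Definition is_cycle (T : finType) (e : rel T) l (f : {ffun 'I_l.+1 -> T}) : bool :=
  [forall i, e (f i) (f (ordS i))].

Section CanonicalCycles.
Variables N l : nat.
Local Notation cycle_map := {ffun 'I_l.+1 -> 'I_N}.
Implicit Types (f : cycle_map) (r : 'I_l.+1) (e : rel 'I_N).

Definition rotate f r : cycle_map := [ffun i => f (i + r)%R].

(* A cycle is counted once, through its rotation that starts at its least
   vertex; this saves the factor l.+1 in the expected number of cycles. *)
Definition canonical_cycles : {set cycle_map} :=
  [set f : cycle_map | injectiveb f & [forall i, f ord0 <= f i]].

Lemma rotate_canonical f : injective f -> exists r, rotate f r \in canonical_cycles.
Proof.
move=> f_inj; pose r := [arg min_(i < ord0) (f i : nat)].
exists r; rewrite inE; apply/andP; split.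
  by apply/injectiveP => i j; rewrite !ffunE => /f_inj/addIr.
apply/forallP => i; rewrite !ffunE add0r /r.
by case: arg_minnP => // j _; apply.
Qed.

Lemma rotate_canonical_inj f f' r r' :
  f \in canonical_cycles -> f' \in canonical_cycles ->
  rotate f r = rotate f' r' -> f = f' /\ r = r'.
Proof.
rewrite !inE => /andP[/injectiveP _ /forallP f_min].
move=> /andP[/injectiveP f'_inj /forallP f'_min] /ffunP eq_rot.
have shift i : f i = f' (i - r + r')%R by move: (eq_rot (i - r)%R); rewrite !ffunE subrK.
have shift' i : f' i = f (i - r' + r)%R by move: (eq_rot (i - r')%R); rewrite !ffunE subrK.
suff r_eq : r = r' by split=> //; apply/ffunP => i; rewrite shift r_eq subrK.
have f'_min_at : f' ord0 = f' (ord0 - r + r')%R.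
  apply/ord_inj/anti_leq; rewrite f'_min -shift.
  by rewrite (leq_trans (f_min (ord0 - r' + r)%R)) // -shift'.
move/f'_inj: f'_min_at; rewrite [ord0]/(0%R : 'I_l.+1) sub0r => /eqP.
by rewrite eq_sym addrC subr_eq0 => /eqP.
Qed.

Lemma card_canonical_cycles : #|canonical_cycles| * l.+1 <= N ^ l.+1.
Proof.
rewrite -[X in _ * X](card_ord l.+1) -cardsT -cardsX.
rewrite -(@card_in_imset _ _ (fun x => rotate x.1 x.2)).
  by apply: leq_trans (max_card _) _; rewrite card_ffun !card_ord.
move=> [f r] [f' r'] /setXP[fC _] /setXP[f'C _] /=.
by case/(rotate_canonical_inj fC f'C) => -> ->.
Qed.

Lemma is_cycle_rotate e f r : is_cycle e f -> is_cycle e (rotate f r).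
Proof. by move=> /forallP f_cyc; apply/forallP => i; rewrite !ffunE -ordS_addr. Qed.

Definition canonical_cycles_in e : {set cycle_map} :=
  [set f in canonical_cycles | is_cycle e f].

Definition cycle_roots e : {set 'I_N} := [set f ord0 | f : cycle_map in canonical_cycles_in e].

Lemma cycle_meets_roots e f :
  injective f -> is_cycle e f -> exists i, f i \in cycle_roots e.
Proof.
move=> f_inj f_cyc; have [r fr_can] := rotate_canonical f_inj.
exists r; apply/imsetP; exists (rotate f r); last by rewrite ffunE add0r.
by rewrite inE fr_can is_cycle_rotate.
Qed.

End CanonicalCycles.

Section InducedSubgraph.
Variables (T : finType) (e : rel T) (A : {set T}).

Definition induced : rel 'I_#|A| := fun i j => e (enum_val i) (enum_val j).

Lemma induced_simple : simple_graph e -> simple_graph induced.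
Proof. by case=> e_sym e_irr; split=> [i j|i]; [exact: e_sym | exact: e_irr]. Qed.

Lemma induced_independent S : independent induced S -> independent e (enum_val @: S).
Proof.
move=> /forall_inP S_ind; apply/forall_inP => _ /imsetP[i iS ->].
by apply/forall_inP => _ /imsetP[j jS ->]; exact: (forall_inP (S_ind i iS)).
Qed.

End InducedSubgraph.

Arguments induced {T} e A.

Lemma independentS (T : finType) (e : rel T) (A B : {set T}) :
  B \subset A -> independent e A -> independent e B.
Proof.
move=> /subsetP BA /forall_inP A_ind; apply/forall_inP => x xB.
by apply/forall_inP => y yB; exact: (forall_inP (A_ind x (BA x xB)) y (BA y yB)).
Qed.

Lemma card_bigcup_le (I T : finType) (P : pred I) (F : I -> {set T}) :
  #|\bigcup_(i | P i) F i| <= \sum_(i | P i) #|F i|.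
Proof.
elim/big_ind2: _ => [|m A n B Am Bn|//]; first by rewrite cards0.
by apply: leq_trans (leq_card_setU A B) _; exact: leq_add.
Qed.

(* Cycles of length l.+1 are indexed by l, so [1 < l < g.-1] covers the
   lengths 3, ..., g - 1. *)
Definition short_cycle_roots N (e : rel 'I_N) g : {set 'I_N} :=
  \bigcup_(l < g.-1 | 1 < l) cycle_roots l e.

Lemma girth_ge_delete_short_cycle_roots N (e : rel 'I_N) g :
  girth_ge (induced e (~: short_cycle_roots e g)) g.
Proof.
move=> k /andP[k_ge3 k_lt_g] [f [f_inj f_cyc]].
case: k => [//|l] in k_ge3 k_lt_g f f_inj f_cyc *.
pose F : {ffun 'I_l.+1 -> 'I_N} := [ffun i => enum_val (f i)].
have F_inj : injective F by move=> i j; rewrite !ffunE => /enum_val_inj/f_inj.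
have F_cyc : is_cycle e F by apply/forallP => i; rewrite !ffunE; exact: f_cyc.
have [i Fi_root] := cycle_meets_roots F_inj F_cyc.
have : F i \in ~: short_cycle_roots e g by rewrite ffunE; exact: enum_valP.
rewrite inE => /negP; apply; apply/bigcupP.
have l_lt : l < g.-1 by rewrite -ltnS prednK // (leq_trans _ k_lt_g).
by exists (Ordinal l_lt).
Qed.

Local Open Scope ring_scope.

Lemma frac_chrom_ge_card_div (R : realType) (T : finType) (e : rel T) a :
  (0 < a)%N -> (forall S, independent e S -> #|S| <= a)%N ->
  frac_chrom_ge e (#|T|%:R / a%:R : R).
Proof.
move=> a_gt0 alpha_le w [w_ge0 w_cover].
rewrite ler_pdivrMr ?ltr0n // mulrC -[#|T|%:R]sumr_const.
apply: le_trans (ler_sum _ (fun v _ => w_cover v)) _.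
rewrite (exchange_big_dep (independent e)) /=; last by move=> v S _ /andP[].
rewrite /fc_weight mulr_sumr; apply: ler_sum => S S_ind.
rewrite (eq_bigl (mem S)) => [|v]; last by rewrite S_ind.
by rewrite sumr_const -[w S *+ _]mulr_natl ler_wpM2r ?w_ge0 // ler_nat alpha_le.
Qed.

Section BernoulliCoins.
Variables (R : realDomainType) (I : finType) (p : R).
Hypotheses (p_ge0 : 0 <= p) (p_le1 : p <= 1).
Local Notation coins := {ffun I -> bool}.
Implicit Types (c : coins) (X Y : coins -> R).

Definition coin_weight c : R := \prod_x (if c x then p else 1 - p).

Definition expect X : R := \sum_c coin_weight c * X c.

Lemma coin_weight_ge0 c : 0 <= coin_weight c.
Proof. by apply: prodr_ge0 => x _; case: (c x); rewrite ?subr_ge0. Qed.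

Lemma natr_forall_in (A : {set I}) (P : pred I) :
  [forall x in A, P x]%:R = \prod_(x in A) (P x)%:R :> R.
Proof.
have [/forall_inP allP|] := boolP [forall x in A, P x].
  by rewrite big1 // => x /allP ->.
rewrite negb_forall_in => /exists_inP[x xA /negbTE nPx].
by rewrite (bigD1 x) //= nPx mul0r.
Qed.

Lemma expect_all_eq (A : {set I}) b :
  expect (fun c => [forall x in A, c x == b]%:R) = (if b then p else 1 - p) ^+ #|A|.
Proof.
pose F x (y : bool) := (if y then p else 1 - p) * (if x \in A then (y == b)%:R else 1).
transitivity (\sum_(c : coins) \prod_x F x (c x)).
  by apply: eq_bigr => c _; rewrite natr_forall_in big_mkcond -big_split.
rewrite -bigA_distr_bigA -prodr_const [RHS]big_mkcond.
apply: eq_bigr => x _; rewrite big_bool /F.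
by case: (x \in A); case: (b); rewrite /= ?mulr1 ?mulr0 ?addr0 ?add0r // addrC subrK.
Qed.

Lemma sum_coin_weight : \sum_c coin_weight c = 1.
Proof.
have := expect_all_eq set0 true; rewrite cards0 expr0 => <-.
apply: eq_bigr => c _; rewrite (_ : [forall x in set0, _] = true) ?mulr1 //.
by apply/forall_inP => x; rewrite in_set0.
Qed.

Lemma eq_expect X Y : X =1 Y -> expect X = expect Y.
Proof. by move=> XY; apply: eq_bigr => c _; rewrite XY. Qed.

Lemma expect_cst a : expect (fun=> a) = a.
Proof. by rewrite /expect -mulr_suml sum_coin_weight mul1r. Qed.

Lemma expectD X Y : expect (fun c => X c + Y c) = expect X + expect Y.
Proof. by rewrite /expect -big_split; apply: eq_bigr => c _; rewrite mulrDr. Qed.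

Lemma expectMr X a : expect (fun c => X c * a) = expect X * a.
Proof. by rewrite /expect mulr_suml; apply: eq_bigr => c _; rewrite mulrA. Qed.

Lemma expect_sum (J : Type) (r : seq J) (P : pred J) (X : J -> coins -> R) :
  expect (fun c => \sum_(j <- r | P j) X j c) = \sum_(j <- r | P j) expect (X j).
Proof. by rewrite /expect; under eq_bigr do rewrite mulr_sumr; rewrite exchange_big. Qed.

Lemma expect_card (J : finType) (A : {set J}) (E : J -> coins -> bool) :
  expect (fun c => #|[set j in A | E j c]|%:R) = \sum_(j in A) expect (fun c => (E j c)%:R).
Proof.
rewrite -expect_sum; apply: eq_expect => c.
rewrite -sum1_card natr_sum big_mkcond [RHS]big_mkcond.
by apply: eq_bigr => j _; rewrite inE; case: (j \in A); case: (E j c).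
Qed.

Lemma exists_lt_expect X a : expect X < a -> exists c, X c < a.
Proof.
move=> EX_lt; case: (pickP [pred c | X c < a]) => [c Xc_lt|no_c]; first by exists c.
suff : expect (fun=> a) <= expect X by rewrite expect_cst leNgt EX_lt.
apply: ler_sum => c _; apply: ler_wpM2l; first exact: coin_weight_ge0.
by rewrite leNgt; move: (no_c c) => /= ->.
Qed.

End BernoulliCoins.

Section RandomGraph.
Variable N : nat.
Local Notation coins := {ffun {set 'I_N} -> bool}.
Implicit Types (c : coins) (S : {set 'I_N}).

(* One coin per subset of vertices; only the two-element subsets matter. *)
Definition rgraph c : rel 'I_N := fun a b => (a != b) && c [set a; b].

Lemma rgraph_simple c : simple_graph (rgraph c).
Proof. by split=> [a b|a]; rewrite /rgraph ?eqxx // eq_sym setUC. Qed.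

Lemma independent_rgraph c S :
  independent (rgraph c) S =
  [forall B in [set B : {set 'I_N} | B \subset S & #|B| == 2], c B == false].
Proof.
apply/forall_inP/forall_inP => [S_ind B | no_edge a aS].
  rewrite inE => /andP[/subsetP BS /cards2P[a [b [ab B_ab]]]].
  have aS : a \in S by rewrite BS // B_ab set21.
  have bS : b \in S by rewrite BS // B_ab set22.
  by move: (forall_inP (S_ind a aS) b bS); rewrite /rgraph ab B_ab /= => /negbTE ->.
apply/forall_inP => b bS; rewrite /rgraph negb_and negbK.
have [//|ab] := eqVneq a b.
rewrite (eqP (no_edge _ _)) // inE cards2 ab andbT.
by apply/subsetP => x /set2P[] ->.
Qed.

Definition cycle_edges l (f : {ffun 'I_l.+1 -> 'I_N}) : {set {set 'I_N}} :=
  [set [set f i; f (ordS i)] | i : 'I_l.+1].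

Lemma is_cycle_rgraph c l (f : {ffun 'I_l.+1 -> 'I_N}) : (0 < l)%N -> injective f ->
  is_cycle (rgraph c) f = [forall B in cycle_edges f, c B == true].
Proof.
move=> l_gt0 f_inj; apply/forallP/forall_inP => [f_cyc _ /imsetP[i _ ->] | f_edges i].
  by have /andP[_ ->] := f_cyc i.
have Si_neq : ordS i != i by apply: (@iter_ordS_neq _ 1); exact: l_gt0.
rewrite /rgraph (inj_eq f_inj) eq_sym Si_neq -[c _]eqb_id.
by apply: f_edges; apply/imsetP; exists i.
Qed.

Lemma card_cycle_edges l (f : {ffun 'I_l.+1 -> 'I_N}) : (1 < l)%N -> injective f ->
  #|cycle_edges f| = l.+1.
Proof.
move=> l_gt1 f_inj; rewrite card_imset ?card_ord // => i j eq_edge.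
have : f i \in [set f j; f (ordS j)] by rewrite -eq_edge set21.
case/set2P => /f_inj // i_eq.
have : f (ordS i) \in [set f j; f (ordS j)] by rewrite -eq_edge set22.
case/set2P => /f_inj; last exact: ordS_inj.
by have := @iter_ordS_neq _ 2 j l_gt1; rewrite /= -i_eq => /eqP SSj_neq /SSj_neq.
Qed.

Variables (R : realFieldType) (p : R).
Hypotheses (p_ge0 : 0 <= p) (p_le1 : p <= 1).

Lemma expect_independent_sets k :
  expect p (fun c => #|[set S in [set S : {set 'I_N} | #|S| == k] | independent (rgraph c) S]|%:R)
  = 'C(N, k)%:R * (1 - p) ^+ 'C(k, 2).
Proof.
rewrite expect_card -[in RHS](card_ord N) -card_draws mulr_natl -sumr_const.
apply: eq_bigr => S; rewrite inE => /eqP S_k.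
under eq_expect => c do rewrite independent_rgraph.
by rewrite expect_all_eq cards_draws S_k.
Qed.

Lemma expect_canonical_cycles l : (1 < l)%N ->
  expect p (fun c => #|canonical_cycles_in l (rgraph c)|%:R)
  = #|canonical_cycles N l|%:R * p ^+ l.+1.
Proof.
move=> l_gt1; rewrite expect_card mulr_natl -sumr_const.
apply: eq_bigr => f; rewrite inE => /andP[/injectiveP f_inj _].
under eq_expect => c do rewrite is_cycle_rgraph ?(ltnW l_gt1) //.
by rewrite expect_all_eq card_cycle_edges.
Qed.

Lemma exists_rgraph_sparse k m g :
  'C(N, k)%:R * (1 - p) ^+ 'C(k, 2) +
    (\sum_(l < g.-1 | (1 < l)%N) #|canonical_cycles N l|%:R * p ^+ l.+1) / m.+1%:R < 1 ->
  exists c, (forall S, #|S| = k -> ~~ independent (rgraph c) S) /\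
            (#|short_cycle_roots (rgraph c) g| <= m)%N.
Proof.
move=> moment_lt1.
pose X c := #|[set S in [set S : {set 'I_N} | #|S| == k] | independent (rgraph c) S]|.
pose Y c := (\sum_(l < g.-1 | (1 < l)%N) #|canonical_cycles_in l (rgraph c)|)%N.
(* First moment: X + Y / (m + 1) has expectation below 1, and for natural
   numbers X and Y this forces X = 0 and Y <= m. *)
have [c XY_lt1] : exists c, (X c)%:R + (Y c)%:R / m.+1%:R < 1 :> R.
  apply: (exists_lt_expect p_ge0 p_le1).
  rewrite expectD expectMr expect_independent_sets /Y.
  under eq_expect => c do rewrite natr_sum.
  by rewrite expect_sum (eq_bigr _ (fun l : 'I_g.-1 => @expect_canonical_cycles l)).
have Y_ge0 : 0 <= (Y c)%:R / m.+1%:R :> R by rewrite divr_ge0.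
have X0 : X c = 0%N.
  apply/eqP; rewrite -leqn0 -ltnS -(ltr_nat R).
  by apply: le_lt_trans XY_lt1; rewrite lerDl.
have Y_le : (Y c <= m)%N.
  have : (Y c)%:R / m.+1%:R < 1 :> R by apply: le_lt_trans XY_lt1; rewrite lerDr.
  by rewrite ltr_pdivrMr ?ltr0n // mul1r ltr_nat ltnS.
exists c; split=> [S S_k|].
  apply/negP => S_ind; move/eqP: X0; rewrite cards_eq0 => /eqP X_empty.
  by have := in_set0 S; rewrite -X_empty !inE S_k eqxx S_ind.
apply: leq_trans (card_bigcup_le _ _) _; apply: leq_trans Y_le.
by apply: leq_sum => l _; exact: leq_imset_card.
Qed.

End RandomGraph.

Section MomentEstimates.
Variable R : realType.
Implicit Types (x p d B : R) (N k n : nat).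

Lemma expR_ge_partial_sum x n : 0 <= x -> \sum_(i < n) x ^+ i / i`!%:R <= expR x.
Proof.
move=> x_ge0; rewrite -(big_mkord xpredT (fun i => x ^+ i / i`!%:R)).
apply: (nondecreasing_cvgn_le _ (is_cvg_series_exp_coeff x) n).
by apply: nondecreasing_series => i _ _; exact: exp_coeff_ge0.
Qed.

Lemma bin_le_expR N k : (0 < k)%N -> 'C(N, k)%:R <= (N%:R / k%:R) ^+ k * expR k%:R :> R.
Proof.
move=> k_gt0; have k_pos : 0 < k%:R :> R by rewrite ltr0n.
have fact_pos : 0 < k`!%:R :> R by rewrite ltr0n fact_gt0.
have bin_fact : 'C(N, k)%:R * k`!%:R <= N%:R ^+ k :> R.
  rewrite -natrM -natrX ler_nat bin_ffact ffact_prod.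
  apply: (@leq_trans (\prod_(i < k) N)); first by apply: leq_prod => i _; exact: leq_subr.
  by rewrite prod_nat_const card_ord.
have pow_fact : k%:R ^+ k <= expR k%:R * k`!%:R :> R.
  rewrite -ler_pdivrMr //; apply: le_trans (@expR_ge1Dxn R k%:R k.-1 (ler0n R k)).
  by rewrite prednK // lerDr.
rewrite -(ler_pM2r fact_pos); apply: le_trans bin_fact _.
have -> : N%:R ^+ k = (N%:R / k%:R) ^+ k * k%:R ^+ k :> R.
  by rewrite -exprMn mulfVK // gt_eqF.
by rewrite -mulrA ler_wpM2l // exprn_ge0 // divr_ge0.
Qed.

Lemma bin_indep_le N k p : 0 <= p -> p <= 1 -> (0 < k)%N ->
  'C(N, k)%:R * (1 - p) ^+ 'C(k, 2) <= (N%:R / k%:R * expR (1 - p * (k.-1)%:R / 2)) ^+ k.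
Proof.
move=> p_ge0 p_le1 k_gt0.
have pow_le : (1 - p) ^+ 'C(k, 2) <= expR ('C(k, 2)%:R * - p).
  rewrite expRM_natl; apply: lerXn2r; rewrite ?nnegrE ?subr_ge0 ?expR_ge0 //.
  exact: expR_ge1Dx.
have bin2E : 'C(k, 2)%:R = k%:R * (k.-1)%:R / 2 :> R.
  have := bin_ffact k 2; rewrite ffactnS ffactn1 (_ : 2`! = 2)%N //.
  by move/(congr1 (fun n => n%:R : R)); rewrite !natrM => <-; rewrite mulfK // pnatr_eq0.
apply: le_trans (ler_pM (ler0n _ _) _ (bin_le_expR N k_gt0) pow_le) _.
  by rewrite exprn_ge0 // subr_ge0.
rewrite -[_ * expR _ * expR _]mulrA -expRD [in leRHS]exprMn -expRM_natl.
apply: ler_wpM2l; first by rewrite exprn_ge0 // divr_ge0.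
suff -> : k%:R + 'C(k, 2)%:R * - p = k%:R * (1 - p * (k.-1)%:R / 2) by [].
by rewrite bin2E; ring.
Qed.

Lemma exprn_mul_le1 B d n : 0 <= d -> 0 <= B -> B <= expR (- d) ->
  B ^+ n * (1 + n%:R * d) <= 1.
Proof.
move=> d_ge0 B_ge0 B_le.
have Bn_le : B ^+ n <= expR (n%:R * - d).
  by rewrite expRM_natl; apply: lerXn2r; rewrite ?nnegrE ?expR_ge0.
apply: le_trans (ler_pM _ _ Bn_le (expR_ge1Dx (n%:R * d))) _.
- exact: exprn_ge0.
- by rewrite addr_ge0 ?mulr_ge0.
by rewrite -expRD mulrN addNr expR0.
Qed.

Lemma canonical_cycles_weight_le N l p : 0 <= p ->
  #|canonical_cycles N l|%:R * p ^+ l.+1 <= (N%:R * p) ^+ l.+1 / l.+1%:R.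
Proof.
move=> p_ge0; rewrite exprMn ler_pdivlMr ?ltr0n // mulrAC.
apply: ler_wpM2r; first exact: exprn_ge0.
by rewrite -natrM -natrX ler_nat card_canonical_cycles.
Qed.

End MomentEstimates.

Lemma exists_girth_ge_frac_chrom_ge (R : realType) (N k m g : nat) (p : R) :
  0 <= p -> p <= 1 -> (1 < k)%N ->
  'C(N, k)%:R * (1 - p) ^+ 'C(k, 2) +
    (\sum_(l < g.-1 | (1 < l)%N) #|canonical_cycles N l|%:R * p ^+ l.+1) / m.+1%:R < 1 ->
  exists (n : nat) (e : rel 'I_n), (n <= N)%N /\ simple_graph e /\ girth_ge e g /\
    frac_chrom_ge e ((N%:R - m%:R) / (k.-1)%:R : R).
Proof.
move=> p_ge0 p_le1 k_gt1 moment_lt1.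
have [c [no_indep few_roots]] := exists_rgraph_sparse p_ge0 p_le1 moment_lt1.
set D := short_cycle_roots (rgraph c) g.
have k1_gt0 : (0 < k.-1)%N by rewrite -ltnS prednK // ltnW.
exists #|~: D|, (induced (rgraph c) (~: D)).
split; first by rewrite -[X in (_ <= X)%N](card_ord N) max_card.
split; first exact/induced_simple/rgraph_simple.
split; first exact: girth_ge_delete_short_cycle_roots.
have alpha_lt_k S : independent (induced (rgraph c) (~: D)) S -> (#|S| <= k.-1)%N.
  move=> S_ind; rewrite -ltnS prednK ?(ltnW k_gt1) // ltnNge; apply/negP => k_le.
  have /card_gt0P[B] : (0 < #|[set B : {set 'I_N} | B \subset enum_val @: S & #|B| == k]|)%N.
    by rewrite cards_draws bin_gt0 card_imset //; exact: enum_val_inj.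
  rewrite inE => /andP[B_sub /eqP B_k].
  by move: (no_indep B B_k); rewrite (independentS B_sub (induced_independent S_ind)).
move=> w /(frac_chrom_ge_card_div k1_gt0 alpha_lt_k); apply: le_trans.
rewrite card_ord ler_pM2r ?invr_gt0 ?ltr0n // lerBlDl -natrD ler_nat.
by rewrite -[X in (X <= _)%N](card_ord N) -(cardsC D) leq_add2r.
Qed.

Section NumericBounds.
Variable R : realType.
Local Notation p := (81%:R / 10%:R ^+ 7 : R).

Lemma edge_probability_ge0 : 0 <= p. Proof. by rewrite divr_ge0 ?exprn_ge0. Qed.

Lemma edge_probability_le1 : p <= 1. Proof. by rewrite ler_pdivrMr ?exprn_gt0 // mul1r; lra. Qed.

Lemma expR_lower_bound : 3553%:R / 1000%:R <= expR (1278%:R / 1000%:R) :> R.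
Proof.
apply: (le_trans _ (@expR_ge_partial_sum R (1278%:R / 1000%:R) 5 _)); last by lra.
by rewrite !big_ord_recr big_ord0 /= !factS fact0 !exprS expr0; lra.
Qed.

Variables N k m : nat.
Hypotheses (N_R : N%:R = 2%:R * 10%:R ^+ 6 :> R) (k_R : k%:R = 565%:R * 10%:R ^+ 3 :> R)
  (m_R : m%:R = 248%:R * 10%:R ^+ 3 :> R).

Lemma independent_sets_moment_le :
  'C(N, k.+1)%:R * (1 - p) ^+ 'C(k.+1, 2) * (1 + k.+1%:R * (1 / 100%:R)) <= 1.
Proof.
pose B := N%:R / k.+1%:R * expR (1 - p * k%:R / 2).
have B_ge0 : 0 <= B by rewrite mulr_ge0 ?divr_ge0 ?expR_ge0.
have B_le : B <= expR (- (1 / 100%:R)).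
  (* x = p k / 2 - 1 - 1 / 100 = 1.27825 *)
  pose x : R := 1278%:R / 1000%:R + 1 / 4000%:R.
  have exponent_E : 1 - p * k%:R / 2 = - (1 / 100%:R) - x by rewrite k_R /x; field.
  rewrite /B exponent_E expRD expRN mulrA ler_pdivrMr ?expR_gt0 // mulrC ler_pM2l ?expR_gt0 //.
  apply: le_trans (_ : _ <= 3553%:R / 1000%:R) _.
    by rewrite N_R -[k.+1%:R]natr1 k_R ler_pdivrMr; lra.
  by apply: le_trans expR_lower_bound _; rewrite ler_expR /x; lra.
have d_ge0 : 0 <= 1 / 100%:R :> R by rewrite divr_ge0.
apply: (le_trans _ (exprn_mul_le1 k.+1 d_ge0 B_ge0 B_le)).
apply: ler_wpM2r; first by apply: addr_ge0; [exact: ler01 | exact: mulr_ge0].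
exact: bin_indep_le edge_probability_ge0 edge_probability_le1 _.
Qed.

Lemma short_cycles_moment_le :
  \sum_(l < 5 | (1 < l)%N) #|canonical_cycles N l|%:R * p ^+ l.+1 <=
  (81%:R / 5%:R) ^+ 3 / 3%:R + (81%:R / 5%:R) ^+ 4 / 4%:R + (81%:R / 5%:R) ^+ 5 / 5%:R.
Proof.
have Np : N%:R * p = 81%:R / 5%:R by rewrite N_R; field.
rewrite big_mkcond !big_ord_recr big_ord0 /= !add0r -Np.
by rewrite !lerD ?canonical_cycles_weight_le ?edge_probability_ge0.
Qed.

Lemma first_moment_bound :
  'C(N, k.+1)%:R * (1 - p) ^+ 'C(k.+1, 2) +
    (\sum_(l < 5 | (1 < l)%N) #|canonical_cycles N l|%:R * p ^+ l.+1) / m.+1%:R < 1.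
Proof.
have := independent_sets_moment_le; have := short_cycles_moment_le.
set X := 'C(_, _)%:R * _; set Y := \sum_(_ < _ | _) _.
rewrite -[k.+1%:R]natr1 -[m.+1%:R]natr1 k_R m_R => Y_le X_le.
have Y_small : Y / (248%:R * 10%:R ^+ 3 + 1) <= 975%:R / 1000%:R by rewrite ler_pdivrMr; lra.
lra.
Qed.

Lemma frac_chrom_ratio_ge : 31%:R / 10%:R <= (N%:R - m%:R) / k%:R :> R.
Proof. by rewrite N_R m_R k_R ler_pdivlMr; lra. Qed.

End NumericBounds.

Local Close Scope ring_scope.

Theorem lemma7 (R : realType) :
  exists (n : nat) (e : rel 'I_n),
    (n <= 2 * 10 ^ 6)%N /\ simple_graph e /\ girth_ge e 6 /\
    frac_chrom_ge e ((31%:R / 10%:R) : R).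
Proof.
have natr_mul_exp a b c : ((a * b ^ c)%:R = a%:R * b%:R ^+ c :> R)%R.
  by rewrite natrM natrX.
have k_gt1 : 1 < (565 * 10 ^ 3).+1 by rewrite ltnS muln_gt0 expn_gt0.
have [n [e [n_le [e_simple [e_girth e_frac]]]]] :=
  exists_girth_ge_frac_chrom_ge (g := 6) (edge_probability_ge0 R)
    (edge_probability_le1 R) k_gt1
    (first_moment_bound (natr_mul_exp _ _ _) (natr_mul_exp _ _ _) (natr_mul_exp _ _ _)).
exists n, e; split; first exact: n_le.
do 2!split=> //; move=> w /e_frac; apply: le_trans.
exact: frac_chrom_ratio_ge (natr_mul_exp _ _ _) (natr_mul_exp _ _ _) (natr_mul_exp _ _ _).
Qed.
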